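(* Let $\mathbf{A}$ be a real $n\times n$ matrix that is totally $J$-sign-symmetric (TJS) (respectively, strictly totally $J$-sign-symmetric (STJS)). Then $\mathbf{A}^T$, as well as every principal submatrix of $\mathbf{A}$ and of $\mathbf{A}^T$, is TJS (respectively, STJS).
   Context: For $J\subseteq[m]=\{1,\ldots,m\}$, $J^c=[m]\setminus J$, an $m\times m$ matrix $(a_{ik})$ is $J$-sign-symmetric if $a_{ik}\ge0$ on $(J\times J)\cup(J^c\times J^c)$ and $a_{ik}\le0$ on $(J\times J^c)\cup(J^c\times J)$; strictly $J$-sign-symmetric if these inequalities are strict. The $j$th compound matrix $\mathbf{A}^{(j)}$ is the $\binom{n}{j}\times\binom{n}{j}$ matrix of all $j\times j$ minors with index sets in lexicographic order. $\mathbf{A}$ is TJS (resp. STJS) if $\mathbf{A}$ is $J$-sign-symmetric (resp. strictly $J$-sign-symmetric) for some $J\subseteq[n]$ and for every $j=2,\ldots,n$ the compound $\mathbf{A}^{(j)}$ is $J_j$-sign-symmetric (resp. strictly $J_j$-sign-symmetric) for some subset $J_j$ of its index set. A principal submatrix $\mathbf{A}(M)$, $M\subseteq[n]$, consists of the rows and columns with indices in $M$. *)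

From mathcomp Require Import all_boot all_order all_algebra.
Set Implicit Arguments. Unset Strict Implicit. Unset Printing Implicit Defensive.
Import Order.TTheory GRing.Theory Num.Theory.
Local Open Scope ring_scope.

Section Defs.
Variable R : realFieldType.

Definition sign_sym (T : finType) (P : pred T) (f : T -> T -> R) (J : {set T}) :=
  forall i k, P i -> P k ->
    if (i \in J) == (k \in J) then 0 <= f i k else f i k <= 0.

Definition strict_sign_sym (T : finType) (P : pred T) (f : T -> T -> R) (J : {set T}) :=
  forall i k, P i -> P k ->
    if (i \in J) == (k \in J) then 0 < f i k else f i k < 0.

(* entry access by natural indices (0 outside the range) *)
Definition entry n (A : 'M[R]_n) (i j : nat) : R :=
  match insub i, insub j with
  | Some i', Some j' => A i' j'
  | _, _ => 0
  end.

(* elements of S in increasing order *)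
Definition sorted_idx n (S : {set 'I_n}) : seq nat := [seq val x | x <- enum S].

Definition minor n (A : 'M[R]_n) (k : nat) (S T : {set 'I_n}) : R :=
  \det (\matrix_(a < k, b < k)
          entry A (nth 0%N (sorted_idx S) a) (nth 0%N (sorted_idx T) b)).

(* The j-th compound matrix, indexed by the j-subsets of [n]
   (the ordering of the index set is irrelevant for sign-symmetry
   with an arbitrary subset J_j of the index set). *)
Definition compound n (A : 'M[R]_n) (j : nat) : {set 'I_n} -> {set 'I_n} -> R :=
  fun S T => minor A j S T.

Definition is_jsubset n (j : nat) : pred {set 'I_n} := fun S => #|S| == j.

Definition TJS n (A : 'M[R]_n) : Prop :=
  (exists J : {set 'I_n}, sign_sym predT (fun i k => A i k) J) /\
  (forall j : nat, (2 <= j <= n)%N ->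
     exists Jj : {set {set 'I_n}}, sign_sym (@is_jsubset n j) (compound A j) Jj).

Definition STJS n (A : 'M[R]_n) : Prop :=
  (exists J : {set 'I_n}, strict_sign_sym predT (fun i k => A i k) J) /\
  (forall j : nat, (2 <= j <= n)%N ->
     exists Jj : {set {set 'I_n}}, strict_sign_sym (@is_jsubset n j) (compound A j) Jj).

(* principal submatrix A(M): rows and columns in M, in increasing order *)
Definition psub n (A : 'M[R]_n) (M : {set 'I_n}) : 'M[R]_#|M| :=
  \matrix_(a, b) A (enum_val a) (enum_val b).

End Defs.

From mathcomp Require Import all_boot all_order all_algebra.
Set Implicit Arguments. Unset Strict Implicit. Unset Printing Implicit Defensive.
Import Order.TTheory GRing.Theory Num.Theory.
Local Open Scope ring_scope.

(* Transposing A transposes every compound A^(j), and sign-symmetry with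
   respect to J is invariant under transposition of the index pair.  A
   principal submatrix A(M) has as its compounds the submatrices of the
   compounds of A indexed by the j-subsets of M (the enumeration of M is
   increasing, so minors are taken with the same row and column order);
   a restriction of a J-sign-symmetric array is sign-symmetric with respect
   to the preimage of J. *)

Section SignPattern.
Variable R : realFieldType.
Variable Q : bool -> R -> bool.

Definition sign_sym_by (T : finType) (P : pred T) (f : T -> T -> R) (J : {set T}) :=
  forall i k, P i -> P k -> Q ((i \in J) == (k \in J)) (f i k).

Lemma sign_sym_by_tr (T : finType) (P : pred T) f J :
  sign_sym_by P f J -> sign_sym_by P (fun i k => f k i) J.
Proof. by move=> H i k Pi Pk; rewrite eq_sym; apply: H. Qed.

Lemma eq_sign_sym_by (T : finType) (P : pred T) f g J :
  (forall i k, P i -> P k -> f i k = g i k) ->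
  sign_sym_by P f J -> sign_sym_by P g J.
Proof. by move=> efg H i k Pi Pk; rewrite -efg //; apply: H. Qed.

Lemma sign_sym_by_comp (T U : finType) (h : U -> T) (P : pred T) (P' : pred U) f J :
  (forall u, P' u -> P (h u)) -> sign_sym_by P f J ->
  sign_sym_by P' (fun u v => f (h u) (h v)) [set u | h u \in J].
Proof. by move=> Ph H i k Pi Pk; rewrite !inE; apply: H; apply: Ph. Qed.

Definition total_sign_sym n (A : 'M[R]_n) : Prop :=
  (exists J : {set 'I_n}, sign_sym_by predT (fun i k => A i k) J) /\
  (forall j : nat, (2 <= j <= n)%N ->
     exists Jj : {set {set 'I_n}}, sign_sym_by (@is_jsubset n j) (compound A j) Jj).

Lemma entry_trmx n (A : 'M[R]_n) x y : entry A^T x y = entry A y x.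
Proof.
by rewrite /entry; case: (insub x) => [a|]; case: (insub y) => [b|] //; rewrite mxE.
Qed.

Lemma compound_trmx n (A : 'M[R]_n) j S T : compound A^T j S T = compound A j T S.
Proof.
rewrite /compound /minor -det_tr; congr (\det _); apply/matrixP => a b.
by rewrite !mxE entry_trmx.
Qed.

Lemma total_sign_sym_trmx n (A : 'M[R]_n) : total_sign_sym A -> total_sign_sym A^T.
Proof.
case=> [[J signA] signC]; split.
  by exists J; apply: eq_sign_sym_by (sign_sym_by_tr signA) => i k _ _; rewrite mxE.
move=> j j_range; have [Jj signCj] := signC j j_range; exists Jj.
by apply: eq_sign_sym_by (sign_sym_by_tr signCj) => S T _ _; rewrite compound_trmx.
Qed.

Lemma sorted_idx_ltn n (S : {set 'I_n}) : sorted ltn (sorted_idx S).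
Proof.
rewrite /sorted_idx /enum_mem -enumT sorted_map.
apply: sorted_filter; first by move=> a b c /=; apply: ltn_trans.
by rewrite -sorted_map val_enum_ord iota_ltn_sorted.
Qed.

Lemma enum_val_ltn n (M : {set 'I_n}) (a b : 'I_#|M|) :
  (a < b)%N -> (enum_val a < enum_val b)%N.
Proof.
move=> lt_ab; have sortedM : sorted (relpre val ltn) (enum M).
  by rewrite -sorted_map; apply: sorted_idx_ltn.
rewrite (enum_val_nth (enum_val a)) (enum_val_nth (enum_val a) b).
by apply: (sorted_ltn_nth _ _ sortedM); rewrite ?inE -?cardE //;
  move=> x y z /=; apply: ltn_trans.
Qed.

Lemma sorted_idx_imset_enum_val n (M : {set 'I_n}) (S : {set 'I_#|M|}) :
  sorted_idx (enum_val @: S) = [seq val (enum_val x) | x <- enum S].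
Proof.
apply: (irr_sorted_eq (leT := ltn)).
- by move=> a b c; apply: ltn_trans.
- by move=> x; rewrite /= ltnn.
- exact: sorted_idx_ltn.
- rewrite sorted_map; have := sorted_idx_ltn S; rewrite /sorted_idx sorted_map.
  by apply: sub_sorted => x y /=; apply: enum_val_ltn.
move=> x; apply/idP/idP.
  case/mapP=> _ /[!mem_enum] /imsetP[z zS ->] ->.
  by apply/mapP; exists z; rewrite ?mem_enum.
case/mapP=> z /[!mem_enum] zS ->.
by apply/mapP; exists (enum_val z); rewrite // mem_enum imset_f.
Qed.

Lemma entry_val n (A : 'M[R]_n) (x y : 'I_n) : entry A (val x) (val y) = A x y.
Proof. by rewrite /entry !valK. Qed.

Lemma compound_psub n (A : 'M[R]_n) (M : {set 'I_n}) j (S T : {set 'I_#|M|}) :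
  #|S| = j -> #|T| = j ->
  compound (psub A M) j S T = compound A j (enum_val @: S) (enum_val @: T).
Proof.
move=> cardS cardT; rewrite /compound /minor; congr (\det _); apply/matrixP => a b.
rewrite !mxE !sorted_idx_imset_enum_val /sorted_idx.
have aS : (a < size (enum S))%N by rewrite -cardE cardS.
have bT : (b < size (enum T))%N by rewrite -cardE cardT.
have x0 : 'I_#|M| by case: (enum S) aS => [|x _] //.
by rewrite !(nth_map x0 0%N _ aS) !(nth_map x0 0%N _ bT) !entry_val mxE.
Qed.

Lemma total_sign_sym_psub n (A : 'M[R]_n) (M : {set 'I_n}) :
  total_sign_sym A -> total_sign_sym (psub A M).
Proof.
case=> [[J signA] signC]; split.
  exists [set u | enum_val u \in J].
  apply: eq_sign_sym_by (sign_sym_by_comp (P' := predT) _ signA) => // i k _ _.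
  by rewrite mxE.
move=> j /andP[j_ge2 j_leM].
have j_len : (j <= n)%N by rewrite (leq_trans j_leM) // -[n in (_ <= n)%N]card_ord max_card.
have [Jj signCj] := signC j (introT andP (conj j_ge2 j_len)).
exists [set S : {set 'I_#|M|} | enum_val @: S \in Jj].
have card_imS (S : {set 'I_#|M|}) : is_jsubset j S -> is_jsubset j (enum_val @: S).
  by rewrite /is_jsubset card_imset //; apply: enum_val_inj.
apply: eq_sign_sym_by (sign_sym_by_comp card_imS signCj) => S T /eqP cardS /eqP cardT.
by rewrite compound_psub.
Qed.

Lemma total_sign_sym_trmx_psub n (A : 'M[R]_n) :
  total_sign_sym A ->
  total_sign_sym A^T /\
  (forall M : {set 'I_n}, total_sign_sym (psub A M) /\ total_sign_sym (psub A^T M)).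
Proof.
move=> signA; have signAT := total_sign_sym_trmx signA.
by split=> // M; split; apply: total_sign_sym_psub.
Qed.

End SignPattern.

Theorem proposition29 (R : realFieldType) (n : nat) (A : 'M[R]_n) :
  (TJS A ->
     TJS A^T /\
     (forall M : {set 'I_n}, TJS (psub A M) /\ TJS (psub A^T M))) /\
  (STJS A ->
     STJS A^T /\
     (forall M : {set 'I_n}, STJS (psub A M) /\ STJS (psub A^T M))).
Proof.
split.
- exact: (@total_sign_sym_trmx_psub _ (fun b x => if b then 0 <= x else x <= 0)).
- exact: (@total_sign_sym_trmx_psub _ (fun b x => if b then 0 < x else x < 0)).
Qed.
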